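(* Let $(\mathtt{g},\sigma)$ be a magnetic system on a closed manifold $M$, let $s>0$ and $\Sigma_s=\{v\in TM:\|v\|=s\}$. Then for every $v\in\Sigma_s$ and all $\xi,\eta\in T_v\Sigma_s$, \[ \omega^\sigma(\xi,\eta)=\langle[\pi_*\xi]^\perp,K^\sigma(\eta)\rangle-\langle K^\sigma(\xi),[\pi_*\eta]^\perp\rangle . \] In particular, the restriction of $\omega^\sigma$ to $T_v\Sigma_s$ is degenerate, and its kernel is the line $\mathbb{R}X^{\mathtt{g},\sigma}_v$.
   Context: A magnetic system is a pair $(\mathtt{g},\sigma)$, $\mathtt{g}=\langle\cdot,\cdot\rangle$ a Riemannian metric, $\sigma$ a closed $2$-form; the Lorentz force $\Omega$ is the skew-adjoint endomorphism of $TM$ with $\sigma(v,w)=\langle v,\Omega(w)\rangle$. $\pi:TM\to M$ is the projection and $K:T(TM)\to TM$ is the Levi-Civita connector: if $Z(t)$ is a curve in $TM$ with $Z(0)=v$ and $\dot Z(0)=\xi$, then $K(\xi)=\frac{{\rm D}Z}{{\rm d}t}(0)$, the Levi-Civita covariant derivative of $Z$ along $\pi\circ Z$. The twisted symplectic form on $TM$ is $\omega^\sigma(\xi,\eta)=\langle\pi_*\xi,K(\eta)\rangle-\langle K(\xi),\pi_*\eta\rangle-\sigma(\pi_*\xi,\pi_*\eta)$. For a unit vector $u$ and $w\in T_{\pi(u)}M$ let $\widetilde\Omega_u(w)=\frac12\big(\langle\Omega(w),u\rangle u+\langle w,u\rangle\Omega(u)+\Omega(w)\big)$. For $\xi\in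 T_v(TM)$ with $v\in\Sigma_s$, the twisted connector is $K^\sigma(\xi)=K(\xi)-\widetilde\Omega_{v/s}(\pi_*\xi)$. For $v\in\Sigma_s$, $[\cdot]^\perp$ denotes orthogonal projection of $T_{\pi(v)}M$ onto $v^\perp$. $X^{\mathtt{g},\sigma}$ is the generator of the magnetic flow on $TM$, i.e. the vector field whose integral curves are $t\mapsto\dot\gamma(t)$ for curves $\gamma$ satisfying $\frac{{\rm D}\dot\gamma}{{\rm d}t}=\Omega(\dot\gamma)$; it is tangent to $\Sigma_s$. *)

(* Pointwise (linear-algebraic) model of the magnetic
   setting at a single vector v in T_x M. *)
From HB Require Import structures.
From mathcomp Require Import all_boot all_order all_algebra.
Set Implicit Arguments. Unset Strict Implicit. Unset Printing Implicit Defensive.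
Import Order.TTheory GRing.Theory Num.Theory.
Local Open Scope ring_scope.

Section Magnetic.
Variables (R : realFieldType) (n : nat).

(* Riemannian inner product on T_xM = 'rV_n given by the Gram matrix G. *)
Definition ip (G : 'M[R]_n) (a b : 'rV[R]_n) : R := (a *m G *m b^T) 0 0.

(* bilinear form with matrix S (the 2-form sigma at x) *)
Definition bil (S : 'M[R]_n) (a b : 'rV[R]_n) : R := (a *m S *m b^T) 0 0.

Definition lorentz (Om : 'M[R]_n) (w : 'rV[R]_n) : 'rV[R]_n := w *m Om.

Definition Omtilde (G Om : 'M[R]_n) (u w : 'rV[R]_n) : 'rV[R]_n :=
  2^-1 *: (ip G (lorentz Om w) u *: u + ip G w u *: lorentz Om u + lorentz Om w).

Definition perp (G : 'M[R]_n) (v w : 'rV[R]_n) : 'rV[R]_n :=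
  w - (ip G w v / ip G v v) *: v.

Variable (W : lmodType R). (* the tangent space T_v(TM) *)

Definition omega_sig (G S : 'M[R]_n) (pi K : W -> 'rV[R]_n) (xi eta : W) : R :=
  ip G (pi xi) (K eta) - ip G (K xi) (pi eta) - bil S (pi xi) (pi eta).

Definition Ksig (G Om : 'M[R]_n) (pi K : W -> 'rV[R]_n) (s : R) (v : 'rV[R]_n)
  (xi : W) : 'rV[R]_n :=
  K xi - Omtilde G Om (s^-1 *: v) (pi xi).

End Magnetic.

From HB Require Import structures.
From mathcomp Require Import all_boot all_order all_algebra.
From mathcomp Require Import ring.
Set Implicit Arguments. Unset Strict Implicit. Unset Printing Implicit Defensive.
Import Order.TTheory GRing.Theory Num.Theory.
Local Open Scope ring_scope.

(* On T_v Sigma_s the constraint <v, K eta> = 0 and the skewness of Omega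
   make every term of the twisting Omtilde and of the projections onto v^perp
   cancel against the sigma term, which gives the formula.  Contracting with
   the generator X gives omega^sigma(X, eta) = <v, K eta>, the differential of
   the energy, so X lies in the kernel.  Conversely, if xi is in the kernel,
   pairing with the horizontal lifts (K eta = 0) forces K xi = Omega(pi xi),
   pairing with the vertical lifts (pi eta = 0, K eta in v^perp) forces
   pi xi to be a multiple of v, and (pi, K) is injective. *)

Section InnerProduct.
Variables (R : realFieldType) (n : nat) (G : 'M[R]_n).

Lemma ipDl a b c : ip G (a + b) c = ip G a c + ip G b c.
Proof. by rewrite /ip !mulmxDl mxE. Qed.

Lemma ipZl k a c : ip G (k *: a) c = k * ip G a c.
Proof. by rewrite /ip -!scalemxAl mxE. Qed.

Lemma ipNl a c : ip G (- a) c = - ip G a c.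
Proof. by rewrite -scaleN1r ipZl mulN1r. Qed.

Lemma ip0l a : ip G 0 a = 0.
Proof. by rewrite -(scale0r (0 : 'rV[R]_n)) ipZl mul0r. Qed.

Lemma ipDr a b c : ip G c (a + b) = ip G c a + ip G c b.
Proof. by rewrite /ip linearD /= mulmxDr mxE. Qed.

Lemma ipZr k a c : ip G c (k *: a) = k * ip G c a.
Proof. by rewrite /ip linearZ /= -scalemxAr mxE. Qed.

Lemma ipNr a c : ip G c (- a) = - ip G c a.
Proof. by rewrite -scaleN1r ipZr mulN1r. Qed.

Lemma ip0r a : ip G a 0 = 0.
Proof. by rewrite -(scale0r (0 : 'rV[R]_n)) ipZr mul0r. Qed.

Lemma ipC : G^T = G -> forall a b, ip G a b = ip G b a.
Proof.
move=> G_sym a b; rewrite /ip.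
have -> : a *m G *m b^T = (b *m G *m a^T)^T by rewrite !trmx_mul trmxK G_sym mulmxA.
by rewrite mxE.
Qed.

Lemma ip_self_eq0 : (forall a, a != 0 -> 0 < ip G a a) ->
  forall a, ip G a a = 0 -> a = 0.
Proof. by move=> G_pos a aa0; apply/eqP; apply: contraT => /G_pos; rewrite aa0 ltxx. Qed.

Lemma ip_perpr : G^T = G -> forall v w, ip G v v != 0 -> ip G v (perp G v w) = 0.
Proof.
move=> G_sym v w vv0.
by rewrite /perp ipDr ipNr ipZr (ipC G_sym v w) divfK // subrr.
Qed.

Lemma lorentzD (Om : 'M[R]_n) a b : lorentz Om (a + b) = lorentz Om a + lorentz Om b.
Proof. by rewrite /lorentz mulmxDl. Qed.

Lemma lorentzZ (Om : 'M[R]_n) k a : lorentz Om (k *: a) = k *: lorentz Om a.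
Proof. by rewrite /lorentz scalemxAl. Qed.

Lemma lorentz0 (Om : 'M[R]_n) : lorentz Om 0 = 0.
Proof. by rewrite /lorentz mul0mx. Qed.

End InnerProduct.

Section LorentzForce.
Variables (R : realFieldType) (n : nat) (G S Om : 'M[R]_n).
Hypotheses (G_sym : G^T = G) (S_skew : S^T = - S)
  (bilE : forall a b, bil S a b = ip G a (lorentz Om b)).

Lemma ip_lorentzr a b : ip G a (lorentz Om b) = - ip G (lorentz Om a) b.
Proof.
rewrite -bilE (ipC G_sym) -bilE /bil.
have -> : b *m S *m a^T = - (a *m S *m b^T)^T.
  by rewrite !trmx_mul trmxK S_skew mulNmx mulmxN opprK mulmxA.
by rewrite !mxE opprK.
Qed.

Lemma ip_lorentzl a b : ip G (lorentz Om a) b = - ip G (lorentz Om b) a.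
Proof. by rewrite (ipC G_sym) ip_lorentzr. Qed.

Lemma ip_lorentz_self a : ip G (lorentz Om a) a = 0.
Proof.
have /eqP : ip G (lorentz Om a) a *+ 2 = 0.
  by rewrite mulr2n -{1}(ipC G_sym) ip_lorentzr addNr.
by rewrite mulrn_eq0 /= => /eqP.
Qed.

Lemma twisted_form_perpE (s : R) (v a b ka kb : 'rV[R]_n) :
  0 < s -> ip G v v = s ^+ 2 -> ip G v ka = 0 -> ip G v kb = 0 ->
  ip G a kb - ip G ka b - bil S a b =
  ip G (perp G v a) (kb - Omtilde G Om (s^-1 *: v) b)
  - ip G (ka - Omtilde G Om (s^-1 *: v) a) (perp G v b).
Proof.
move=> s_gt0 vv vka vkb; rewrite bilE /Omtilde /perp.
rewrite !(ipDl, ipDr, ipZl, ipZr, ipNl, ipNr, lorentzD, lorentzZ).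
rewrite !ip_lorentzr !ip_lorentz_self !(ip_lorentzl _ v) vv vkb.
rewrite (ipC G_sym ka v) vka (ipC G_sym v b).
by field; rewrite gt_eqF.
Qed.

End LorentzForce.

Section TangentSphereBundle.
Variables (R : realFieldType) (n : nat) (G S Om : 'M[R]_n) (W : lmodType R).
Variables (pi K : {linear W -> 'rV[R]_n}) (v : 'rV[R]_n) (X : W).
Hypotheses (G_sym : G^T = G) (G_pos : forall a, a != 0 -> 0 < ip G a a).
Hypotheses (S_skew : S^T = - S)
  (bilE : forall a b, bil S a b = ip G a (lorentz Om b)).
Hypothesis connector_bij : forall a b, exists! xi : W, pi xi = a /\ K xi = b.
Hypotheses (vv_neq0 : ip G v v != 0) (piX : pi X = v) (KX : K X = lorentz Om v).

Lemma omega_sigZl c xi eta :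
  omega_sig G S pi K (c *: xi) eta = c * omega_sig G S pi K xi eta.
Proof.
rewrite /omega_sig !linearZ /= !ipZl /bil -!scalemxAl !mxE.
by rewrite -!mulrBr.
Qed.

Lemma connector_inj xi eta : pi xi = pi eta -> K xi = K eta -> xi = eta.
Proof.
move=> pi_eq K_eq; have [lift [_ uniq_lift]] := connector_bij (pi eta) (K eta).
by rewrite -(uniq_lift xi) ?(uniq_lift eta).
Qed.

Lemma generator_neq0 : X != 0.
Proof.
apply: contra_neq vv_neq0 => X0.
by rewrite -piX X0 linear0 ip0l.
Qed.

Lemma generator_tangent : ip G v (K X) = 0.
Proof.
by rewrite KX (ip_lorentzr G_sym S_skew bilE) (ip_lorentz_self G_sym S_skew bilE) oppr0.
Qed.

Lemma omega_sig_generator eta : omega_sig G S pi K X eta = ip G v (K eta).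
Proof.
rewrite /omega_sig piX KX bilE (ip_lorentzr G_sym S_skew bilE v).
by rewrite opprK subrK.
Qed.

Section Kernel.
Variable xi : W.
Hypothesis xi_ker :
  forall eta, ip G v (K eta) = 0 -> omega_sig G S pi K xi eta = 0.

Lemma kernel_connectorE : K xi = lorentz Om (pi xi).
Proof.
pose d := lorentz Om (pi xi) - K xi.
have [eta [[pi_eta K_eta] _]] := connector_bij d 0.
have /xi_ker : ip G v (K eta) = 0 by rewrite K_eta ip0r.
rewrite /omega_sig pi_eta K_eta ip0r sub0r => xi_d.
have : ip G d d = 0.
  rewrite -xi_d {1}/d ipDl ipNl bilE (ip_lorentzr G_sym S_skew bilE).
  by rewrite opprK addrC.
move/(ip_self_eq0 G_pos)/eqP.
by rewrite subr_eq0 => /eqP.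
Qed.

Lemma kernel_projectionE : pi xi = (ip G (pi xi) v / ip G v v) *: v.
Proof.
pose z := perp G v (pi xi).
have vz : ip G v z = 0 by rewrite ip_perpr.
have [eta [[pi_eta K_eta] _]] := connector_bij 0 z.
have /xi_ker : ip G v (K eta) = 0 by rewrite K_eta.
rewrite /omega_sig pi_eta K_eta ip0r bilE lorentz0 ip0r !subr0 => xi_z.
have : ip G z z = 0 by rewrite {1}/z /perp ipDl ipNl ipZl xi_z vz mulr0 subrr.
by move/(ip_self_eq0 G_pos)/eqP; rewrite subr_eq0 => /eqP.
Qed.

Lemma kernel_generator_multiple : exists c, xi = c *: X.
Proof.
exists (ip G (pi xi) v / ip G v v).
apply: connector_inj; rewrite !linearZ /= ?piX ?KX -?lorentzZ.
  exact: kernel_projectionE.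
by rewrite kernel_connectorE -kernel_projectionE.
Qed.

End Kernel.

End TangentSphereBundle.

Theorem lemma4p1 (R : realFieldType) (n : nat) (G S Om : 'M[R]_n)
  (W : lmodType R) (pi K : {linear W -> 'rV[R]_n}) (s : R) (v : 'rV[R]_n) (X : W) :
  G^T = G ->
  (forall a : 'rV[R]_n, a != 0 -> 0 < ip G a a) ->
  S^T = - S ->
  (forall a b : 'rV[R]_n, bil S a b = ip G a (lorentz Om b)) ->
  (forall a b : 'rV[R]_n, exists! xi : W, pi xi = a /\ K xi = b) ->
  0 < s -> ip G v v = s ^+ 2 ->
  pi X = v -> K X = lorentz Om v ->
  let TSigma := fun xi : W => ip G v (K xi) = 0 in
  (forall xi eta : W, TSigma xi -> TSigma eta ->
     omega_sig G S pi K xi eta =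
       ip G (perp G v (pi xi)) (Ksig G Om pi K s v eta)
     - ip G (Ksig G Om pi K s v xi) (perp G v (pi eta))) /\
  TSigma X /\ X != 0 /\
  (forall xi : W, TSigma xi ->
     ((forall eta : W, TSigma eta -> omega_sig G S pi K xi eta = 0) <->
      exists c : R, xi = c *: X)).
Proof.
move=> G_sym G_pos S_skew bilE connector_bij s_gt0 vv piX KX TSigma.
have vv_neq0 : ip G v v != 0 by rewrite vv expf_neq0 // gt_eqF.
split; first by move=> xi eta Txi Teta; exact: twisted_form_perpE.
split; first exact: (generator_tangent G_sym S_skew bilE KX).
split; first exact: (generator_neq0 vv_neq0 piX).
move=> xi _; split.
  exact: (kernel_generator_multiple G_sym G_pos S_skew bilE connector_bij vv_neq0 piX KX).
move=> [c ->] eta Teta.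
by rewrite omega_sigZl (omega_sig_generator G_sym S_skew bilE piX KX) Teta mulr0.
Qed.
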